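(* Let $\alpha,\beta\in\mathbb{R}$ and $\eta\in\{1,-1\}$, and let $G_4$ be the connected, simply connected Lie group whose Lie algebra $\mathfrak{g}_4$ has a basis $\{e_1,e_2,e_3\}$ with $[e_1,e_2]=-e_2+(2\eta-\beta)e_3$, $[e_1,e_3]=-\beta e_2+e_3$, $[e_2,e_3]=\alpha e_1$, equipped with the left-invariant Lorentzian metric $g$ for which $\{e_1,e_2,e_3\}$ is pseudo-orthonormal with $e_3$ timelike, and with the product structure $J$. Let $\lambda_0,c\in\mathbb{R}$. Then there exists a derivation $D$ of $\mathfrak{g}_4$ with $\widetilde{\mathrm{Ric}}^0=(s^0\lambda_0+c)\mathrm{Id}+D$ (i.e. $(G_4,g,J)$ is an algebraic Schouten soliton associated to the canonical connection $\nabla^0$) if and only if $\alpha=0$, $\beta=\eta$ and $c=0$.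
   Context: Pseudo-orthonormal means $g(e_1,e_1)=g(e_2,e_2)=1$, $g(e_3,e_3)=-1$, $g(e_i,e_j)=0$ for $i\neq j$; left-invariant tensors are identified with their values on $\mathfrak{g}$. $\nabla$ is the Levi-Civita connection of $g$. The product structure $J$ is the left-invariant endomorphism with $Je_1=e_1$, $Je_2=e_2$, $Je_3=-e_3$. The canonical connection is $\nabla^0_XY=\nabla_XY-\frac12(\nabla_XJ)JY$, and the Kobayashi–Nomizu connection is $\nabla^1_XY=\nabla^0_XY-\frac14[(\nabla_YJ)JX-(\nabla_{JY}J)X]$. For $k=0,1$: $R^k(X,Y)Z=\nabla^k_X\nabla^k_YZ-\nabla^k_Y\nabla^k_XZ-\nabla^k_{[X,Y]}Z$; $\rho^k(X,Y)=-g(R^k(X,e_1)Y,e_1)-g(R^k(X,e_2)Y,e_2)+g(R^k(X,e_3)Y,e_3)$; $\widetilde\rho^k(X,Y)=\frac12(\rho^k(X,Y)+\rho^k(Y,X))$; $\widetilde{\mathrm{Ric}}^k$ is defined by $\widetilde\rho^k(X,Y)=g(\widetilde{\mathrm{Ric}}^k(X),Y)$; and $s^k=\widetilde\rho^k(e_1,e_1)+\widetilde\rho^k(e_2,e_2)-\widetilde\rho^k(e_3,e_3)$. A derivation of $\mathfrak{g}$ is a linear map $D$ with $D[X,Y]=[DX,Y]+[X,DY]$. $(G,g,J)$ is an algebraic Schouten soliton associated to $\nabla^k$ (with real constants $\lambda_0,c$) if $\widetilde{\mathrm{Ric}}^k=(s^k\lambda_0+c)\mathrm{Id}+D$ for some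 derivation $D$. *)

(* Left-invariant objects on the 3-dim Lie group G_4 are
   identified with their values on the Lie algebra g_4 = R^3 (column vectors
   'cV[R]_3 of coordinates in the basis e1,e2,e3). *)
From HB Require Import structures.
From mathcomp Require Import all_boot all_order all_algebra.
Set Implicit Arguments. Unset Strict Implicit. Unset Printing Implicit Defensive.
Import Order.TTheory GRing.Theory Num.Theory.
Local Open Scope ring_scope.

Section G4.
Variable R : realFieldType.
Variables (al be et : R).

Definition i1 : 'I_3 := @Ordinal 3 0 isT.
Definition i2 : 'I_3 := @Ordinal 3 1 isT.
Definition i3 : 'I_3 := @Ordinal 3 2 isT.

Definition x1 (X : 'cV[R]_3) : R := X i1 ord0.
Definition x2 (X : 'cV[R]_3) : R := X i2 ord0.
Definition x3 (X : 'cV[R]_3) : R := X i3 ord0.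

Definition vec3 (a b c : R) : 'cV[R]_3 := \col_(i < 3) nth 0 [:: a; b; c] i.

Definition e1 : 'cV[R]_3 := vec3 1 0 0.
Definition e2 : 'cV[R]_3 := vec3 0 1 0.
Definition e3 : 'cV[R]_3 := vec3 0 0 1.

(* Lie bracket of g_4, extended bilinearly and skew-symmetrically from
   [e1,e2] = -e2 + (2 eta - beta) e3, [e1,e3] = -beta e2 + e3, [e2,e3] = alpha e1 *)
Definition br (X Y : 'cV[R]_3) : 'cV[R]_3 :=
  (x1 X * x2 Y - x2 X * x1 Y) *: vec3 0 (-1) (2 * et - be)
+ (x1 X * x3 Y - x3 X * x1 Y) *: vec3 0 (- be) 1
+ (x2 X * x3 Y - x3 X * x2 Y) *: vec3 al 0 0.

Definition g (X Y : 'cV[R]_3) : R := x1 X * x1 Y + x2 X * x2 Y - x3 X * x3 Y.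

(* Levi-Civita connection on left-invariant fields (Koszul formula):
   2 g(nabla_X Y, Z) = g([X,Y],Z) - g([Y,Z],X) + g([Z,X],Y),
   and W = g(W,e1) e1 + g(W,e2) e2 - g(W,e3) e3. *)
Definition koszul (X Y Z : 'cV[R]_3) : R :=
  (g (br X Y) Z - g (br Y Z) X + g (br Z X) Y) / 2.
Definition nabla (X Y : 'cV[R]_3) : 'cV[R]_3 :=
  vec3 (koszul X Y e1) (koszul X Y e2) (- koszul X Y e3).

Definition J (X : 'cV[R]_3) : 'cV[R]_3 := vec3 (x1 X) (x2 X) (- x3 X).

Definition nablaJ (X Y : 'cV[R]_3) : 'cV[R]_3 := nabla X (J Y) - J (nabla X Y).

Definition nabla0 (X Y : 'cV[R]_3) : 'cV[R]_3 :=
  nabla X Y - (1/2) *: nablaJ X (J Y).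

Definition curv0 (X Y Z : 'cV[R]_3) : 'cV[R]_3 :=
  nabla0 X (nabla0 Y Z) - nabla0 Y (nabla0 X Z) - nabla0 (br X Y) Z.

Definition rho0 (X Y : 'cV[R]_3) : R :=
  - g (curv0 X e1 Y) e1 - g (curv0 X e2 Y) e2 + g (curv0 X e3 Y) e3.

Definition rho0t (X Y : 'cV[R]_3) : R := (rho0 X Y + rho0 Y X) / 2.

Definition s0 : R := rho0t e1 e1 + rho0t e2 e2 - rho0t e3 e3.

Definition is_derivation (D : 'M[R]_3) : Prop :=
  forall X Y : 'cV[R]_3, D *m br X Y = br (D *m X) Y + br X (D *m Y).

(* algebraic Schouten soliton for nabla0: Ric~0 = (s0 lambda0 + c) Id + D,
   Ric~0 being defined by rho~0(X,Y) = g(Ric~0 X, Y). *)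
Definition schouten_soliton0 (lam0 c : R) : Prop :=
  exists D : 'M[R]_3, is_derivation D /\
    forall X Y : 'cV[R]_3, rho0t X Y = g ((s0 * lam0 + c) *: X + D *m X) Y.

End G4.

(* The canonical connection acts on left-invariant fields as
   [nabla0_X = omega X *: rot12], with [rot12] the rotation of the spacelike
   plane <e1, e2> and [omega] a 1-form, so the quadratic terms of its
   curvature cancel and [R0(X, Y) = - omega [X, Y] *: rot12].  The
   symmetrized Ricci operator is then the matrix [ricM], and [s0 = 2 ric_diag].
   As g is nondegenerate, the only candidate is [D = ricM - k Id] with
   [k = s0 lam0 + c].  The derivation identity on [e1, e2], [e1, e3], [e2, e3]
   gives three polynomial equations; using [eta^2 = 1], the case [alpha = 0]
   turns them into [(beta - eta)^3 = 0] and the case [k = 0] into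
   [(beta - eta)^2 = 0].  For [alpha = 0], [beta = eta] the Ricci operator
   vanishes, so [k = c] must be [0] and then [D = 0] works. *)
From HB Require Import structures.
From mathcomp Require Import all_boot all_order all_algebra.
From mathcomp Require Import ring lra.
Import Order.TTheory GRing.Theory Num.Theory.
Local Open Scope ring_scope.
Set Implicit Arguments. Unset Strict Implicit.

Section Coordinates.
Variable R : realFieldType.
Implicit Types (X Y : 'cV[R]_3) (D : 'M[R]_3).

Lemma x1_vec3 (a b c : R) : x1 (vec3 a b c) = a. Proof. by rewrite /x1 mxE. Qed.
Lemma x2_vec3 (a b c : R) : x2 (vec3 a b c) = b. Proof. by rewrite /x2 mxE. Qed.
Lemma x3_vec3 (a b c : R) : x3 (vec3 a b c) = c. Proof. by rewrite /x3 mxE. Qed.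
Lemma x1_0 : x1 (0 : 'cV[R]_3) = 0. Proof. by rewrite /x1 mxE. Qed.
Lemma x2_0 : x2 (0 : 'cV[R]_3) = 0. Proof. by rewrite /x2 mxE. Qed.
Lemma x3_0 : x3 (0 : 'cV[R]_3) = 0. Proof. by rewrite /x3 mxE. Qed.
Lemma x1D X Y : x1 (X + Y) = x1 X + x1 Y. Proof. by rewrite /x1 mxE. Qed.
Lemma x2D X Y : x2 (X + Y) = x2 X + x2 Y. Proof. by rewrite /x2 mxE. Qed.
Lemma x3D X Y : x3 (X + Y) = x3 X + x3 Y. Proof. by rewrite /x3 mxE. Qed.
Lemma x1N X : x1 (- X) = - x1 X. Proof. by rewrite /x1 mxE. Qed.
Lemma x2N X : x2 (- X) = - x2 X. Proof. by rewrite /x2 mxE. Qed.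
Lemma x3N X : x3 (- X) = - x3 X. Proof. by rewrite /x3 mxE. Qed.
Lemma x1Z (t : R) X : x1 (t *: X) = t * x1 X. Proof. by rewrite /x1 mxE. Qed.
Lemma x2Z (t : R) X : x2 (t *: X) = t * x2 X. Proof. by rewrite /x2 mxE. Qed.
Lemma x3Z (t : R) X : x3 (t *: X) = t * x3 X. Proof. by rewrite /x3 mxE. Qed.

Lemma coord_mulmx D X i :
  (D *m X) i ord0 = D i i1 * x1 X + D i i2 * x2 X + D i i3 * x3 X.
Proof.
rewrite mxE !big_ord_recl big_ord0 addr0 addrA /x1 /x2 /x3.
have -> : (lift ord0 (lift ord0 ord0) : 'I_3) = i3 by apply: val_inj.
have -> : (lift ord0 ord0 : 'I_3) = i2 by apply: val_inj.
by have -> : (ord0 : 'I_3) = i1 by apply: val_inj.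
Qed.

Lemma x1_mulmx D X : x1 (D *m X) = D i1 i1 * x1 X + D i1 i2 * x2 X + D i1 i3 * x3 X.
Proof. exact: coord_mulmx. Qed.
Lemma x2_mulmx D X : x2 (D *m X) = D i2 i1 * x1 X + D i2 i2 * x2 X + D i2 i3 * x3 X.
Proof. exact: coord_mulmx. Qed.
Lemma x3_mulmx D X : x3 (D *m X) = D i3 i1 * x1 X + D i3 i2 * x2 X + D i3 i3 * x3 X.
Proof. exact: coord_mulmx. Qed.

Definition coordE := (x1_vec3, x2_vec3, x3_vec3, x1D, x2D, x3D, x1N, x2N, x3N,
  x1Z, x2Z, x3Z, x1_mulmx, x2_mulmx, x3_mulmx).

Lemma coordP X Y : x1 X = x1 Y -> x2 X = x2 Y -> x3 X = x3 Y -> X = Y.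
Proof.
move=> h1 h2 h3; apply/matrixP=> i j; rewrite ord1.
case: i => [[|[|[|//]]] lti].
- by have <- : i1 = Ordinal lti by apply: val_inj.
- by have <- : i2 = Ordinal lti by apply: val_inj.
- by have <- : i3 = Ordinal lti by apply: val_inj.
Qed.

Lemma g_nondegenerate X Y : (forall Z, g X Z = g Y Z) -> X = Y.
Proof.
move=> eqg; apply: coordP.
- by move: (eqg (e1 R)); rewrite /g !coordE; lra.
- by move: (eqg (e2 R)); rewrite /g !coordE; lra.
- by move: (eqg (e3 R)); rewrite /g !coordE; lra.
Qed.

End Coordinates.

Section CanonicalConnection.
Variables (R : realFieldType) (al be et : R).
Implicit Types (X Y Z : 'cV[R]_3) (D : 'M[R]_3).

Local Notation br := (br al be et).

Lemma brE X Y : br X Y = vec3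
  (al * (x2 X * x3 Y - x3 X * x2 Y))
  (- (x1 X * x2 Y - x2 X * x1 Y) - be * (x1 X * x3 Y - x3 X * x1 Y))
  ((2 * et - be) * (x1 X * x2 Y - x2 X * x1 Y) + (x1 X * x3 Y - x3 X * x1 Y)).
Proof. by apply: coordP; rewrite /br !coordE; ring. Qed.

Definition omega X : R := x2 X + (et + al / 2) * x3 X.

Definition rot12 Y : 'cV[R]_3 := vec3 (- x2 Y) (x1 Y) 0.

Lemma nabla0E X Y : nabla0 al be et X Y = omega X *: rot12 Y.
Proof.
apply: coordP; rewrite /nabla0 /nablaJ /nabla /J /koszul /g /e1 /e2 /e3;
  by rewrite /omega /rot12 !brE !coordE; field; rewrite ?pnatr_eq0.
Qed.

Lemma curv0E X Y Z : curv0 al be et X Y Z = - omega (br X Y) *: rot12 Z.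
Proof. by apply: coordP; rewrite /curv0 !nabla0E /rot12 !coordE; ring. Qed.

Definition ric_diag : R := -1 + 2 * et ^+ 2 - be * et + al * et - al * be / 2.
Definition ric_skew : R := et / 2 - be / 2 + al / 4.

Definition ricM : 'M[R]_3 := \matrix_(i < 3, j < 3)
  nth 0 (nth [::] [:: [:: ric_diag; 0; 0];
                      [:: 0; ric_diag; ric_skew];
                      [:: 0; - ric_skew; 0]] i) j.

Lemma ricM_mulmx X :
  ricM *m X = vec3 (ric_diag * x1 X) (ric_diag * x2 X + ric_skew * x3 X)
                   (- ric_skew * x2 X).
Proof. by apply: coordP; rewrite !coordE !mxE /=; ring. Qed.

Lemma ricM_shift_mulmx k X : (ricM - k%:M) *m X = ricM *m X - k *: X.
Proof. by rewrite mulmxBl mul_scalar_mx. Qed.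

Lemma rho0t_ricM X Y : rho0t al be et X Y = g (ricM *m X) Y.
Proof.
rewrite /rho0t /rho0 !curv0E ricM_mulmx /g /omega /rot12 /e1 /e2 /e3 !brE.
by rewrite !coordE /ric_diag /ric_skew; field; rewrite ?pnatr_eq0.
Qed.

Lemma s0E : s0 al be et = 2 * ric_diag.
Proof. by rewrite /s0 !rho0t_ricM !ricM_mulmx /g /e1 /e2 /e3 !coordE; ring. Qed.

Lemma is_derivation_ext D D' :
  (forall X, D *m X = D' *m X) -> is_derivation al be et D -> is_derivation al be et D'.
Proof. by move=> eqD derD X Y; rewrite -!eqD. Qed.

Lemma is_derivation0 : is_derivation al be et 0.
Proof.
move=> X Y; rewrite !mul0mx; apply: coordP.
all: by rewrite !brE !coordE !(x1_0, x2_0, x3_0); ring.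
Qed.

Lemma schouten_soliton0P lam0 c :
  schouten_soliton0 al be et lam0 c <->
  is_derivation al be et (ricM - (s0 al be et * lam0 + c)%:M).
Proof.
set k := s0 al be et * lam0 + c.
split=> [[D [derD rhoD]]|derD].
- apply: is_derivation_ext derD => X; rewrite ricM_shift_mulmx.
  have -> : ricM *m X = k *: X + D *m X.
    by apply: g_nondegenerate => Y; rewrite -rho0t_ricM rhoD.
  by rewrite [k *: X + _]addrC addrK.
- exists (ricM - k%:M); split=> // X Y.
  by rewrite rho0t_ricM ricM_shift_mulmx addrC subrK.
Qed.

Lemma derivation_ricM_shift k :
  is_derivation al be et (ricM - k%:M) ->
  [/\ al * k = 0, 2 * ric_skew = k * be
    & ric_diag - k + 2 * ric_skew * (et - be) = 0].
Proof.
move=> derD.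
have d12 := derD (e1 R) (e2 R); have d13 := derD (e1 R) (e3 R).
have d23 := derD (e2 R) (e3 R).
move: (congr1 (@x2 R) d12) (congr1 (@x3 R) d12) (congr1 (@x2 R) d13).
move: (congr1 (@x1 R) d23).
rewrite !ricM_shift_mulmx !ricM_mulmx !brE /e1 /e2 /e3 !coordE.
move=> h1 h2 h3 h4; split; nra.
Qed.

End CanonicalConnection.

Lemma soliton_equations_solve (R : realFieldType) (al be et k : R) :
  et ^+ 2 = 1 -> al * k = 0 -> 2 * ric_skew al be et = k * be ->
  ric_diag al be et - k + 2 * ric_skew al be et * (et - be) = 0 ->
  [/\ al = 0, be = et & k = 0].
Proof.
rewrite /ric_diag /ric_skew => et2 h1 h2 h3.
have /orP[/eqP al0|/eqP k0] : (al == 0) || (k == 0) by rewrite -mulf_eq0 h1.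
- subst al.
  have kE : k = -1 + 2 * et ^+ 2 - be * et + (be - et) ^+ 2 by lra.
  have : (be - et) ^+ 3 = 0.
    have -> : (be - et) ^+ 3 = k * be - (et - be) - et * (et ^+ 2 - 1).
      by rewrite kE; ring.
    by rewrite -[k * be]h2 et2; field.
  move/eqP; rewrite expf_eq0 /= subr_eq0 => /eqP be_et; subst be.
  by split=> //; rewrite kE subrr expr0n /= -expr2 et2; ring.
- subst k.
  have al_be : al = 2 * (be - et) by lra.
  subst al.
  have : (be - et) ^+ 2 = 0.
    have -> : (be - et) ^+ 2 = et ^+ 2 - 1 - (-1 + 2 * et ^+ 2 - be * et
        + 2 * (be - et) * et - 2 * (be - et) * be / 2) by field.
    by rewrite et2; lra.
  move/eqP; rewrite expf_eq0 /= subr_eq0 => /eqP be_et; subst be.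
  by split=> //; ring.
Qed.

Lemma ric_coeffs_eq0 (R : realFieldType) (et : R) :
  et ^+ 2 = 1 -> ric_diag 0 et et = 0 /\ ric_skew 0 et et = 0.
Proof.
by rewrite /ric_diag /ric_skew => et2; split; [rewrite -expr2 et2 | ]; field.
Qed.

Theorem theorem4p8 (R : realFieldType) (al be et : R) (het : et = 1 \/ et = -1)
    (lam0 c : R) :
  schouten_soliton0 al be et lam0 c <-> (al = 0 /\ be = et /\ c = 0).
Proof.
have et2 : et ^+ 2 = 1 by case: het => ->; rewrite ?expr1n ?sqrrN ?expr1n.
rewrite schouten_soliton0P s0E; split.
- move=> /derivation_ricM_shift [h1 h2 h3].
  have [al0 be_et k0] := soliton_equations_solve et2 h1 h2 h3.
  subst al be; have [diag0 _] := ric_coeffs_eq0 et2.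
  by rewrite diag0 mulr0 mul0r add0r in k0.
- move=> [-> [-> ->]]; have [diag0 skew0] := ric_coeffs_eq0 et2.
  apply: is_derivation_ext (is_derivation0 _ _ _) => X.
  rewrite ricM_shift_mulmx ricM_mulmx diag0 skew0 mul0mx; apply: coordP.
  all: by rewrite !coordE !(x1_0, x2_0, x3_0); ring.
Qed.
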